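(* Let $L$ be a finite-dimensional Lie algebra over a field $F$. Then $L$ is two-generated if and only if $L/\phi(L)$ is two-generated.
   Context: All Lie algebras are finite-dimensional over an arbitrary field $F$. A Lie algebra is two-generated if it is generated as a Lie algebra by two of its elements. The Frattini subalgebra $F(L)$ of $L$ is the intersection of all maximal subalgebras of $L$, and the Frattini ideal $\phi(L)$ is the largest ideal of $L$ contained in $F(L)$. *)

From HB Require Import structures.
From mathcomp Require Import all_boot all_order all_algebra.
Set Implicit Arguments. Unset Strict Implicit. Unset Printing Implicit Defensive.
Import GRing.Theory.
Local Open Scope ring_scope.


Definition lie_bracket (F : fieldType) (L : vectType F) (br : L -> L -> L) : Prop :=
  [/\ (forall (a : F) (x y z : L), br (a *: x + y) z = a *: br x z + br y z),
      (forall (a : F) (x y z : L), br z (a *: x + y) = a *: br z x + br z y),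
      (forall x : L, br x x = 0) &
      (forall x y z : L, br x (br y z) + br y (br z x) + br z (br x y) = 0)].

Definition subalg (F : fieldType) (L : vectType F) (br : L -> L -> L)
  (U : {vspace L}) : Prop :=
  forall u v, u \in U -> v \in U -> br u v \in U.

Definition lie_ideal (F : fieldType) (L : vectType F) (br : L -> L -> L)
  (I : {vspace L}) : Prop :=
  forall u v, u \in I -> br u v \in I.

Definition maximal_subalg (F : fieldType) (L : vectType F) (br : L -> L -> L)
  (U : {vspace L}) : Prop :=
  [/\ subalg br U, U != fullv &
      forall V : {vspace L}, subalg br V -> (U <= V)%VS -> V = U \/ V = fullv].

(* Frattini subalgebra F(L): intersection of all maximal subalgebras
   (as a predicate on L; it is L itself if there are none). *)
Definition frattini_sub (F : fieldType) (L : vectType F) (br : L -> L -> L)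
  (x : L) : Prop :=
  forall U : {vspace L}, maximal_subalg br U -> x \in U.

Definition is_frattini_ideal (F : fieldType) (L : vectType F) (br : L -> L -> L)
  (I : {vspace L}) : Prop :=
  [/\ lie_ideal br I,
      (forall x, x \in I -> frattini_sub br x) &
      forall J : {vspace L}, lie_ideal br J ->
        (forall x, x \in J -> frattini_sub br x) -> (J <= I)%VS].

Definition two_generated (F : fieldType) (L : vectType F) (br : L -> L -> L) : Prop :=
  exists x y : L, forall U : {vspace L}, subalg br U -> x \in U -> y \in U -> U = fullv.

Definition lie_hom (F : fieldType) (L M : vectType F) (brL : L -> L -> L)
  (brM : M -> M -> M) (f : 'Hom(L, M)) : Prop :=
  forall x y, f (brL x y) = brM (f x) (f y).

From mathcomp Require Import all_boot all_order all_algebra.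
From mathcomp Require Import zify.
From Stdlib Require Import Classical.
Set Implicit Arguments.
Unset Strict Implicit.
Unset Printing Implicit Defensive.

Import GRing.Theory.
Local Open Scope ring_scope.

(* Lie homomorphisms pull back and push forward subalgebras, so a surjection
   carries generators to generators.  Conversely, lift two generators of
   L/phi(L) to a, b in L: a subalgebra U of L containing a and b maps onto
   L/phi(L), i.e. U + phi(L) = L.  If U were proper it would lie in a maximal
   subalgebra V; as phi(L) <= V, V would contain U + phi(L) = L. *)

Lemma addv_ker_full (F : fieldType) (L M : vectType F) (f : 'Hom(L, M))
    (U : {vspace L}) :
  (f @: U)%VS = limg f -> (U + lker f)%VS = fullv.
Proof.
move=> fU; apply/eqP; rewrite eqEsubv subvf /=; apply/subvP => z _.
have /memv_imgP [u Uu fz] : f z \in (f @: U)%VS by rewrite fU memv_img ?memvf.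
by rewrite -(subrK u z) addrC memv_add // memv_ker linearB /= fz subrr.
Qed.

Section Subalgebras.

Variables (F : fieldType) (L : vectType F) (br : L -> L -> L).

Lemma subalg_sub_maximal (U : {vspace L}) :
  subalg br U -> U != fullv -> exists2 V, maximal_subalg br V & (U <= V)%VS.
Proof.
have [n] := ubnP (\dim (fullv : {vspace L}) - \dim U).
elim: n U => // n IH U codimU sU nU.
have [maxU | not_maxU] := classic (maximal_subalg br U); first by exists U.
have [V [sV UV nVU nVf]] : exists V : {vspace L},
    [/\ subalg br V, (U <= V)%VS, V != U & V != fullv].
  apply: NNPP => noV; apply: not_maxU; split=> // V sV UV.
  have [-> | nVU] := eqVneq V U; first by left.
  have [-> | nVf] := eqVneq V fullv; first by right.
  by case: noV; exists V.
have ltUV : (\dim U < \dim V)%N by rewrite (ltn_leqif (dimv_leqif_eq UV)) eq_sym.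
have leVf : (\dim V <= \dim (fullv : {vspace L}))%N by rewrite dimvS ?subvf.
have [|W maxW VW] := IH V _ sV nVf; first by lia.
by exists W; last exact: subv_trans VW.
Qed.

Lemma subalg_addv_frattini (U I : {vspace L}) :
  subalg br U -> (forall x, x \in I -> frattini_sub br x) ->
  (U + I)%VS = fullv -> U = fullv.
Proof.
move=> sU frI UI; have [// | nU] := eqVneq U fullv.
have [V maxV UV] := subalg_sub_maximal sU nU.
have [_ /eqP nVf _] := maxV; case: nVf.
apply/eqP; rewrite eqEsubv subvf -UI subv_add UV /=.
by apply/subvP => x /frI/(_ V maxV).
Qed.

End Subalgebras.

Section Homomorphisms.

Variables (F : fieldType) (L M : vectType F).
Variables (br : L -> L -> L) (brM : M -> M -> M) (f : 'Hom(L, M)).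
Hypothesis hf : lie_hom br brM f.

Lemma subalg_preim (U : {vspace M}) : subalg brM U -> subalg br (f @^-1: U).
Proof. by move=> sU u v; rewrite -!memv_preim hf; apply: sU. Qed.

Lemma subalg_img (U : {vspace L}) : subalg br U -> subalg brM (f @: U).
Proof.
move=> sU _ _ /memv_imgP [u Uu ->] /memv_imgP [v Uv ->].
by rewrite -hf memv_img ?sU.
Qed.

End Homomorphisms.

Theorem lemma2p1 (F : fieldType) (L : vectType F) (br : L -> L -> L)
  (hL : lie_bracket br) (Phi : {vspace L}) (hPhi : is_frattini_ideal br Phi)
  (M : vectType F) (brM : M -> M -> M) (hM : lie_bracket brM)
  (f : 'Hom(L, M)) (hf : lie_hom br brM f) (fsurj : limg f = fullv)
  (fker : lker f = Phi) :
  two_generated br <-> two_generated brM.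
Proof.
split=> [[x [y genL]] | [x [y genM]]].
- exists (f x), (f y) => U sU xU yU.
  have preU : (f @^-1: U)%VS = fullv.
    by apply: genL; rewrite -?memv_preim //; apply: subalg_preim.
  have U_limg : (U <= limg f)%VS by rewrite fsurj subvf.
  by rewrite -(lpreimK U_limg) preU.
- have lift m : exists a, f a = m.
    have /memv_imgP [a _ ->] : m \in limg f by rewrite fsurj memvf.
    by exists a.
  have [[a fa] [b fb]] := (lift x, lift y); subst x y.
  exists a, b => U sU aU bU.
  have imgU : (f @: U)%VS = limg f.
    by rewrite fsurj; apply: genM; [apply: subalg_img | apply: memv_img ..].
  have [_ frPhi _] := hPhi.
  by apply: (subalg_addv_frattini sU frPhi); rewrite -fker; apply: addv_ker_full.
Qed.
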